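(* Let $a\in\mathcal{T}_n$ have rank $k$ with $k<n$ and kernel type $\lambda$. Let $G\le\mathcal{S}_n$ be a group which is $k$-homogeneous and $\lambda$-homogeneous. Then $(a,G)$ is an $\mathcal{S}_n$-pair, i.e. $\langle a,G\rangle\setminus G=\langle a,\mathcal{S}_n\rangle\setminus\mathcal{S}_n$.
   Context: $\Omega=\{1,\ldots,n\}$, $\mathcal{T}_n$ is the monoid of all maps $\Omega\to\Omega$, $\mathcal{S}_n$ the symmetric group. $\operatorname{rank}(a)=|\Omega a|$; the kernel of $a$ is the partition of $\Omega$ into the classes of $\{(x,y):xa=ya\}$, and its type is the non-increasing list of class sizes. $G$ is $k$-homogeneous if transitive on $k$-subsets of $\Omega$. For a partition $\lambda$ of $n$, $G$ is $\lambda$-homogeneous if for any two ordered partitions $(A_1,A_2,\ldots)$, $(B_1,B_2,\ldots)$ of $\Omega$ with $|A_i|=|B_i|=\lambda_i$ there is $g\in G$ mapping the set of parts $\{A_1,A_2,\ldots\}$ onto $\{B_1,B_2,\ldots\}$. *)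

From mathcomp Require Import all_boot all_fingroup.
Set Implicit Arguments. Unset Strict Implicit. Unset Printing Implicit Defensive.

(* Omega = 'I_n ; T_n = {ffun 'I_n -> 'I_n} ; S_n = {perm 'I_n}. *)
Notation tmap n := {ffun 'I_n -> 'I_n}.

(* right-action composition: x (f ; g) = (x f) g *)
Definition tcomp n (f g : tmap n) : tmap n := [ffun x => g (f x)].
Definition tid n : tmap n := [ffun x => x].
Definition pmap n (g : {perm 'I_n}) : tmap n := [ffun x => g x].

Inductive gen_monoid n (S : tmap n -> Prop) : tmap n -> Prop :=
| gen_one : gen_monoid S (tid n)
| gen_mul f s : gen_monoid S f -> S s -> gen_monoid S (tcomp f s).

Definition gens n (a : tmap n) (G : {set {perm 'I_n}}) : tmap n -> Prop :=
  fun f => f = a \/ exists2 g, g \in G & f = pmap g.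

Definition in_gen_minus n (a : tmap n) (G : {set {perm 'I_n}}) (f : tmap n) : Prop :=
  gen_monoid (gens a G) f /\ ~ (exists2 g, g \in G & f = pmap g).

Definition rank n (a : tmap n) : nat := #|[set a x | x : 'I_n]|.

Definition kernel n (a : tmap n) : {set {set 'I_n}} := preim_partition a [set: 'I_n].

Definition ptype n (P : {set {set 'I_n}}) : seq nat := sort geq [seq #|A| | A : {set 'I_n} in P].

Definition kernel_type n (a : tmap n) : seq nat := ptype (kernel a).

Definition k_homogeneous n (G : {set {perm 'I_n}}) (k : nat) : Prop :=
  forall A B : {set 'I_n}, #|A| = k -> #|B| = k ->
    exists2 g, g \in G & [set g x | x in A] = B.

Definition lambda_homogeneous n (G : {set {perm 'I_n}}) (lam : seq nat) : Prop :=
  forall P Q : {set {set 'I_n}},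
    partition P [set: 'I_n] -> partition Q [set: 'I_n] ->
    ptype P = lam -> ptype Q = lam ->
    exists2 g, g \in G & [set [set g x | x in A] | A : {set 'I_n} in P] = Q.

Definition Sn_pair n (a : tmap n) (G : {set {perm 'I_n}}) : Prop :=
  forall f : tmap n, in_gen_minus a G f <-> in_gen_minus a [set: {perm 'I_n}] f.

From Pilot Require Import Defs.
From mathcomp Require Import all_boot all_fingroup.
Set Implicit Arguments. Unset Strict Implicit. Unset Printing Implicit Defensive.
Local Open Scope group_scope.
Notation pmap := Defs.pmap.

(* Maps act on the right and A is the image of a. By lambda-homogeneity, for every
   permutation p some h in G gives h a the kernel of p a, so p a = h a pi for a
   permutation pi; hence every element of <a, S_n> \ S_n is u a s with u in <a, G>
   or u = 1, and it suffices that a s lies in <a, G> for every s. By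
   k-homogeneity s = p h with h in G and p stabilising A, and a p only depends on
   the restriction of p to A. Whenever g a is injective on A, a g a = a rho for the
   permutation rho of A induced by g a, and these rho generate a group F with
   a F contained in <a, G>. Comparing the rho for g h and g h', where h and h'
   realise the kernels of t a for transpositions t meeting a kernel class with
   two points, yields every transposition of A, so F = Sym(A). Conversely, as a
   is not injective, no element of <a, G> outside G is a permutation. *)

Section TransformationMonoid.
Variable n : nat.
Implicit Types (f g h : tmap n) (S : tmap n -> Prop).

Lemma tcompA f g h : tcomp f (tcomp g h) = tcomp (tcomp f g) h.
Proof. by apply/ffunP => x; rewrite !ffunE. Qed.

Lemma tcomp_tid f : tcomp f (tid n) = f.
Proof. by apply/ffunP => x; rewrite !ffunE. Qed.

Lemma pmap1 : pmap 1 = tid n.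
Proof. by apply/ffunP => x; rewrite !ffunE perm1. Qed.

Lemma pmapM (p q : {perm 'I_n}) : pmap (p * q) = tcomp (pmap p) (pmap q).
Proof. by apply/ffunP => x; rewrite !ffunE permM. Qed.

Lemma gen_monoid_comp S f g :
  gen_monoid S f -> gen_monoid S g -> gen_monoid S (tcomp f g).
Proof.
move=> Sf; elim=> [|g' s _ IH Ss]; first by rewrite tcomp_tid.
by rewrite tcompA; apply: gen_mul.
Qed.

Lemma gen_monoid_gen S s : S s -> gen_monoid S s.
Proof.
move=> Ss; have -> : s = tcomp (tid n) s by apply/ffunP => x; rewrite !ffunE.
exact: gen_mul (gen_one S) Ss.
Qed.

Lemma gen_monoidS S (S' : tmap n -> Prop) f :
  (forall s, S s -> S' s) -> gen_monoid S f -> gen_monoid S' f.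
Proof.
by move=> sSS'; elim=> [|g s _ IH Ss]; [apply: gen_one | apply: gen_mul (sSS' s Ss)].
Qed.

End TransformationMonoid.

Section Permutations.
Variable T : finType.
Implicit Types (A : {set T}) (p q : {perm T}).

Lemma perm_on_eq A p q : perm_on A p -> perm_on A q -> {in A, p =1 q} -> p = q.
Proof.
move=> onAp onAq eqA; apply/permP => x.
by have [/eqA //|xNA] := boolP (x \in A); rewrite !(out_perm _ xNA).
Qed.

Lemma Sym_sub_gen_tperm A (H : {group {perm T}}) b :
  b \in A -> {in A, forall v, tperm b v \in H} -> Sym A \subset H.
Proof.
move=> bA tbH.
have tH u v : u \in A -> v \in A -> tperm u v \in H.
  move=> uA vA; have [<-|vu] := eqVneq v u; first by rewrite tperm1 group1.
  have [->|ub] := eqVneq u b; first exact: tbH.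
  have [->|vb] := eqVneq v b; first by rewrite tpermC tbH.
  rewrite eq_sym in vb; rewrite eq_sym in vu.
  by rewrite -(tpermJ_tperm vb vu) groupJ ?tbH.
apply/subsetP => s; rewrite inE.
have [m] := ubnP #|[pred z | s z != z]|; elim: m s => // m IH s /ltnSE le_s_m sA.
case: (pickP (fun z => s z != z)) => [z sz | s_id]; last first.
  rewrite (_ : s = 1) ?group1 //.
  by apply/permP => z; apply/eqP/idPn; rewrite perm1 s_id.
have zA : z \in A by apply: (subsetP sA); rewrite inE.
have s'zA : s^-1 z \in A by rewrite (perm_closed _ (perm_onV sA)).
set t := tperm z (s^-1 z).
have -> : s = t * (t * s) by rewrite mulgA tperm2 mul1g.
have tA : perm_on A t.
  apply: subset_trans (tperm_on _ _) _.
  by apply/subsetP => y; rewrite !inE => /orP[]/eqP->.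
rewrite groupM ?tH // IH ?perm_onM //.
rewrite (cardD1 z) !inE sz in le_s_m; apply: leq_ltn_trans le_s_m.
apply: subset_leq_card; apply/subsetP=> y.
rewrite !inE permM permE /= -(canF_eq (permK _)).
have [-> | ne_yz] := eqVneq y z; first by rewrite permKV eqxx.
by case: (s y =P z) => // -> _; rewrite eq_sym.
Qed.

End Permutations.

Section Partitions.
Variable T : finType.
Implicit Types (P Q : {set {set T}}) (g : {perm T}).

Lemma partition_imset_perm P g :
  partition P [set: T] -> partition [set [set g x | x in B] | B : {set T} in P] [set: T].
Proof.
have imT : [set g x | x in [set: T]] = [set: T].
  by apply/setP => x; rewrite inE; apply/imsetP; exists (g^-1 x); rewrite ?inE ?permKV.
by move=> partP; have := imset_partition P [set: T] (@perm_inj _ g); rewrite imT partP.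
Qed.

Lemma pblock_imset_perm P Q g u v :
  partition P [set: T] -> [set [set g x | x in B] | B : {set T} in P] = Q ->
  (v \in pblock Q u) = (g^-1 v \in pblock P (g^-1 u)).
Proof.
move=> partP defQ; have [/eqP covP _ _] := and3P partP.
have [_ tiQ _] := and3P (partition_imset_perm g partP); rewrite defQ in tiQ.
set B := pblock P (g^-1 u).
have PB : B \in P by rewrite pblock_mem // covP.
have uB : u \in [set g x | x in B].
  by rewrite -{1}(permKV g u) mem_imset ?mem_pblock ?covP //; exact: perm_inj.
rewrite (def_pblock tiQ _ uB); last by rewrite -defQ imset_f.
by rewrite -{1}(permKV g v) mem_imset //; exact: perm_inj.
Qed.

End Partitions.

Lemma ptype_imset_perm n (P : {set {set 'I_n}}) (g : {perm 'I_n}) :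
  ptype [set [set g x | x in B] | B : {set 'I_n} in P] = ptype P.
Proof.
apply/perm_sortP.
- by move=> u v; apply: leq_total.
- by move=> u v w /= uv vw; apply: leq_trans vw uv.
- by move=> u v /andP[vu uv]; apply/eqP; rewrite eqn_leq; apply/andP.
have gB_inj := imset_inj (@perm_inj _ g).
set F := fun B : {set 'I_n} => [set g x | x in B].
rewrite (_ : [seq #|B| | B : {set 'I_n} in P] =
             [seq #|B| | B : {set 'I_n} <- map F (enum P)]); last first.
  by rewrite -map_comp; apply: eq_map => B /=; rewrite card_imset //; exact: perm_inj.
apply: perm_map; apply: uniq_perm; rewrite ?enum_uniq ?(map_inj_uniq gB_inj) ?enum_uniq // => B.
by rewrite mem_enum; apply/imsetP/mapP => -[C PC ->]; exists C; rewrite ?mem_enum in PC *.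
Qed.

Lemma kernel_pblock n (f : tmap n) u v : (f u == f v) = (v \in pblock (kernel f) u).
Proof.
rewrite pblock_equivalence_partition ?inE //.
by split=> // [/eqP->].
Qed.

Section SnPair.
Variables (n : nat) (a : tmap n) (G : {group {perm 'I_n}}).
Local Notation A := [set a x | x : 'I_n].
Local Notation S := (gen_monoid (gens a G)).

Lemma mem_im x : a x \in A.
Proof. exact: imset_f. Qed.

Lemma gen_a : S a.
Proof. by apply: gen_monoid_gen; left. Qed.

Lemma gen_G g : g \in G -> S (pmap g).
Proof. by move=> Gg; apply: gen_monoid_gen; right; exists g. Qed.

Definition rep d := odflt d [pick z | a z == d].

Lemma a_rep d : d \in A -> a (rep d) = d.
Proof.
case/imsetP => x _ ->; rewrite /rep.
by case: pickP => [z /eqP //|/(_ x)]; rewrite eqxx.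
Qed.

Definition induced_perms : {set {perm 'I_n}} :=
  [set p : {perm 'I_n} |
    [exists g in G, [forall y, p y == if y \in A then a (g y) else y]]].

Local Notation F := <<induced_perms>>.

Lemma gen_induced_Sym : F \subset Sym A.
Proof.
rewrite gen_subG; apply/subsetP => p /[!inE] /exists_inP[g _ /forallP Ep].
apply/subsetP => y; rewrite inE; apply: contraR => yNA.
by rewrite (eqP (Ep y)) (negPf yNA).
Qed.

Lemma mem_induced_perms g : g \in G -> {in A &, injective (fun y => a (g y))} ->
  exists2 p, p \in induced_perms & {in A, forall y, p y = a (g y)}.
Proof.
move=> Gg inj_ag; pose f y := if y \in A then a (g y) else y.
have inj_f : injective f.
  move=> u v; rewrite /f.
  case: ifP => uA; case: ifP => vA; [exact: inj_ag | | | by []].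
  - by move=> Euv; move: vA; rewrite -Euv mem_im.
  - by move=> Euv; move: uA; rewrite Euv mem_im.
exists (perm inj_f) => [|y yA]; last by rewrite permE /f yA.
by rewrite inE; apply/exists_inP; exists g => //; apply/forallP => y; rewrite permE.
Qed.

Lemma gen_a_induced f : f \in F -> S (tcomp a (pmap f)).
Proof.
case/gen_prodgP => m [c Rc ->]; elim: m c Rc => [|m IH] c Rc.
  by rewrite big_ord0 pmap1 tcomp_tid; exact: gen_a.
rewrite big_ord_recr /=; set q := \prod_(i < m) _.
have onAq : perm_on A q.
  have Fq : q \in F by apply: group_prod => i _; rewrite mem_gen.
  by have /(subsetP gen_induced_Sym) := Fq; rewrite inE.
have /[!inE] /exists_inP[g Gg /forallP Ec] := Rc ord_max.
have -> : tcomp a (pmap (q * c ord_max)) =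
          tcomp (tcomp a (pmap q)) (tcomp (pmap g) a).
  apply/ffunP => x; rewrite !ffunE permM (eqP (Ec _)).
  by rewrite (perm_closed _ onAq) mem_im.
by apply: gen_monoid_comp (IH _ _) (gen_monoid_comp (gen_G Gg) gen_a).
Qed.

Lemma kernel_eq_factor (h p : {perm 'I_n}) :
  (forall u v, (a (h u) == a (h v)) = (a (p u) == a (p v))) ->
  exists pi : {perm 'I_n}, forall z, a (h z) = pi (a (p z)).
Proof.
move=> ker_hp; pose f d := if d \in A then a (h (p^-1 (rep d))) else d.
have a_p_rep d : d \in A -> a (p (p^-1 (rep d))) = d by move=> dA; rewrite permKV a_rep.
have inj_f : injective f.
  move=> u v; rewrite /f.
  case: ifP => uA; case: ifP => vA; last by [].
  - by move/eqP; rewrite ker_hp !a_p_rep // => /eqP.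
  - by move=> Euv; move: vA; rewrite -Euv mem_im.
  - by move=> Euv; move: uA; rewrite Euv mem_im.
exists (perm inj_f) => z; rewrite permE /f mem_im.
by apply/eqP; rewrite ker_hp a_p_rep ?mem_im.
Qed.

Section Homogeneous.
Hypothesis homog_k : k_homogeneous G (rank a).
Hypothesis homog_lam : lambda_homogeneous G (kernel_type a).

Lemma lambda_homog_factor (p : {perm 'I_n}) :
  exists2 h, h \in G & exists pi : {perm 'I_n}, forall z, a (h z) = pi (a (p z)).
Proof.
set P := kernel a; set Q := [set [set p^-1 x | x in B] | B : {set 'I_n} in P].
have partP : partition P [set: 'I_n] := preim_partitionP a _.
have [g Gg defQ] :=
  homog_lam partP (partition_imset_perm p^-1 partP) erefl (ptype_imset_perm P p^-1).
exists g^-1; rewrite ?groupV //; apply: kernel_eq_factor => u v.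
rewrite !kernel_pblock -/P -(pblock_imset_perm _ _ partP defQ).
by rewrite (pblock_imset_perm _ _ partP (erefl Q)) invgK.
Qed.

(* tau is rho_(g h)^-1 * rho_(g h') for some g in G mapping A onto r A. *)
Lemma induced_link (r : 'I_n -> 'I_n) (h h' phi phi' : {perm 'I_n}) :
  h \in G -> h' \in G ->
  {in A, forall d, a (h (r d)) = phi d} -> {in A, forall d, a (h' (r d)) = phi' d} ->
  exists2 tau, tau \in F & {in A, forall d, tau (phi d) = phi' d}.
Proof.
move=> Gh Gh' Eh Eh'.
have inj_r : {in A &, injective r}.
  by move=> d1 d2 d1A d2A Er; apply: (@perm_inj _ phi); rewrite -!Eh // Er.
have [g Gg Eg] := homog_k (erefl #|A|) (card_in_imset inj_r).
have gVrA d : d \in A -> g^-1 (r d) \in A.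
  move=> dA; have /imsetP[z zA ->] : r d \in [set g z | z in A] by rewrite Eg imset_f.
  by rewrite permK.
have induced k (psi : {perm 'I_n}) : k \in G -> {in A, forall d, a (k (r d)) = psi d} ->
    exists2 rho, rho \in F & {in A, forall d, rho (g^-1 (r d)) = psi d}.
  move=> Gk Ek; have [|rho Rrho Erho] := mem_induced_perms (groupM Gg Gk).
    move=> z1 z2 z1A z2A; rewrite !permM.
    have /imsetP[d1 d1A Ez1] : g z1 \in [set r d | d in A] by rewrite -Eg imset_f.
    have /imsetP[d2 d2A Ez2] : g z2 \in [set r d | d in A] by rewrite -Eg imset_f.
    rewrite Ez1 Ez2 !Ek // => /perm_inj Ed.
    by apply: (@perm_inj _ g); rewrite Ez1 Ez2 Ed.
  exists rho => [|d dA]; first exact: mem_gen.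
  by rewrite Erho ?gVrA // permM permKV Ek.
have [rho Frho Erho] := induced h phi Gh Eh.
have [rho' Frho' Erho'] := induced h' phi' Gh' Eh'.
exists (rho^-1 * rho') => [|d dA]; first by rewrite groupM ?groupV.
by rewrite permM -Erho // permK Erho'.
Qed.

Section Transposition.
Variables x x' w : 'I_n.
Hypotheses (neq_xx' : x != x') (eq_ax' : a x' = a x) (neq_aw : a w != a x).

(* Chooses u and v over a x and a w, and a preimage over every other point of A;
   u and v need not lie over a x and a w. *)
Let sect u v d := if d == a x then u else if d == a w then v else rep d.

Lemma a_sect (t : 'I_n -> 'I_n) u v d :
  (forall z, a z != a x -> a z != a w -> t z = z) -> d \in A ->
  a (t (sect u v d)) = if d == a x then a (t u) else if d == a w then a (t v) else d.
Proof.
move=> t_id dA; rewrite /sect.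
case: ifP => // dx; case: ifP => // dw.
by rewrite t_id a_rep ?dx ?dw.
Qed.

Lemma sect_fix (t : 'I_n -> 'I_n) u v :
  (forall z, a z != a x -> a z != a w -> t z = z) -> a (t u) = a x -> a (t v) = a w ->
  {in A, forall d, a (t (sect u v d)) = d}.
Proof.
move=> t_id Eu Ev d dA; rewrite a_sect // Eu Ev.
by case: eqP => [->|_] //; case: eqP.
Qed.

Lemma sect_swap (t : 'I_n -> 'I_n) u v :
  (forall z, a z != a x -> a z != a w -> t z = z) -> a (t u) = a w -> a (t v) = a x ->
  {in A, forall d, a (t (sect u v d)) = tperm (a x) (a w) d}.
Proof.
move=> t_id Eu Ev d dA; rewrite a_sect // Eu Ev.
case: tpermP => [->|->|/eqP/negPf-> /eqP/negPf->]; rewrite ?eqxx ?(negPf neq_aw) //.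
Qed.

(* h_i induces t_i only up to an unknown pi_i, but pi_1 and pi_2 cancel in
   tau1 * tau2 * tau3. *)
Lemma tperm_induced : tperm (a x) (a w) \in F.
Proof.
set sw := tperm (a x) (a w).
have [h1 Gh1 [pi1 E1]] := lambda_homog_factor (tperm x w).
have [h2 Gh2 [pi2 E2]] := lambda_homog_factor (tperm x' w).
have id_fix z : a z != a x -> a z != a w -> id z = z by [].
have t1_fix z : a z != a x -> a z != a w -> tperm x w z = z.
  move=> zx zw; rewrite tpermD //; last by apply: contraNneq zw => <-.
  by apply: contraNneq zx => <-.
have t2_fix z : a z != a x -> a z != a w -> tperm x' w z = z.
  move=> zx zw; rewrite tpermD //; last by apply: contraNneq zw => <-.
  by apply: contraNneq zx => <-; rewrite eq_ax'.
have wx : w != x by apply: contraNneq neq_aw => ->.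
have wx' : w != x' by apply: contraNneq neq_aw => ->; rewrite eq_ax'.
have [tau1 Ftau1 L1] : exists2 tau, tau \in F &
    {in A, forall d, tau ((1 : {perm 'I_n}) d) = (sw * pi1) d}.
  apply: (@induced_link (sect x w)) (group1 _) Gh1 _ _ => d dA.
    by rewrite !perm1; apply: (sect_fix id_fix).
  by rewrite E1 permM; congr (pi1 _); apply: sect_swap; rewrite ?tpermL ?tpermR.
have [tau2 Ftau2 L2] : exists2 tau, tau \in F &
    {in A, forall d, tau ((sw * pi1) d) = pi2 d}.
  apply: (@induced_link (sect x x')) Gh1 Gh2 _ _ => d dA.
    rewrite E1 permM; congr (pi1 _); apply: sect_swap; rewrite ?tpermL //.
    by rewrite tpermD // eq_sym.
  rewrite E2; congr (pi2 _); apply: sect_fix; rewrite ?tpermL //.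
  by rewrite tpermD // eq_sym.
have [tau3 Ftau3 L3] : exists2 tau, tau \in F &
    {in A, forall d, tau ((sw * pi2) d) = (1 : {perm 'I_n}) d}.
  apply: (@induced_link (sect x' w)) Gh2 (group1 _) _ _ => d dA.
    by rewrite E2 permM; congr (pi2 _); apply: sect_swap; rewrite ?tpermL ?tpermR.
  by rewrite !perm1; apply: (sect_fix id_fix).
have onA_sw : perm_on A sw.
  apply: subset_trans (tperm_on _ _) _.
  by apply/subsetP => y /[!inE] /orP[] /eqP->; apply: mem_im.
have onA_F tau : tau \in F -> perm_on A tau.
  by move/(subsetP gen_induced_Sym); rewrite inE.
have Ftau : tau1 * tau2 * tau3 \in F by rewrite !groupM.
suff Esw : sw = tau1 * tau2 * tau3 by rewrite Esw.
apply: (perm_on_eq onA_sw (onA_F _ Ftau)) => d dA.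
have swdA : sw d \in A by rewrite (perm_closed _ onA_sw).
have := L1 d dA; rewrite perm1 !permM => ->.
rewrite -[pi1 (sw d)]permM L2 //.
have -> : pi2 d = (sw * pi2) (sw d) by rewrite permM tpermK.
by rewrite L3 // perm1.
Qed.

End Transposition.

Lemma Sym_sub_induced : ~~ injectiveb a -> Sym A \subset F.
Proof.
case/injectivePn => x [x' neq_xx' eq_axx'].
apply: (Sym_sub_gen_tperm (mem_im x)) => _ /imsetP[w _ ->].
have [->|neq_aw] := eqVneq (a w) (a x); first by rewrite tperm1 group1.
exact: tperm_induced neq_xx' (esym eq_axx') neq_aw.
Qed.

Lemma gen_a_perm (s : {perm 'I_n}) : ~~ injectiveb a -> S (tcomp a (pmap s)).
Proof.
move=> ninj_a.
have [h Gh Eh] : exists2 h, h \in G & [set h z | z in A] = [set s z | z in A].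
  by apply: homog_k (erefl _) _; rewrite card_imset //; exact: perm_inj.
set p := s * h^-1.
have Np : p \in 'N(A | 'P).
  apply/astabsP => y; rewrite /= apermE /p permM.
  have -> : (h^-1 (s y) \in A) = (s y \in [set h z | z in A]).
    by rewrite -{2}(permKV h (s y)) mem_imset //; exact: perm_inj.
  by rewrite Eh mem_imset //; exact: perm_inj.
have Fq : restr_perm A p \in F.
  by apply: (subsetP (Sym_sub_induced ninj_a)); rewrite inE restr_perm_on.
have -> : tcomp a (pmap s) = tcomp (tcomp a (pmap (restr_perm A p))) (pmap h).
  by apply/ffunP => x; rewrite !ffunE restr_permE ?mem_im // permM permKV.
exact: gen_monoid_comp (gen_a_induced Fq) (gen_G Gh).
Qed.

Lemma perm_a_factor (p : {perm 'I_n}) :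
  exists2 h, h \in G & exists s, tcomp (pmap p) a = tcomp (tcomp (pmap h) a) (pmap s).
Proof.
have [h Gh [pi Eh]] := lambda_homog_factor p.
by exists h => //; exists pi^-1; apply/ffunP => z; rewrite !ffunE Eh permK.
Qed.

End Homogeneous.

Lemma gen_monoid_G_cases f : ~~ injectiveb a -> gen_monoid (gens a G) f ->
  (exists2 g, g \in G & f = pmap g) \/ ~~ injectiveb f.
Proof.
case/injectivePn => x [x' neq_xx' eq_axx'].
elim=> [|f0 s _ IH Gs]; first by left; exists 1; rewrite ?group1 ?pmap1.
have [[g Gg ->]|/injectivePn[y [y' neq_yy' eq_f0]]] := IH; last first.
  by right; apply/injectivePn; exists y, y'; rewrite // !ffunE eq_f0.
case: Gs => [->|[g' Gg' ->]]; last by left; exists (g * g'); rewrite ?groupM ?pmapM.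
right; apply/injectivePn; exists (g^-1 x), (g^-1 x').
  by rewrite (inj_eq (@perm_inj _ g^-1)).
by rewrite !ffunE !permKV.
Qed.

Lemma gen_monoid_Sym_cases f :
  lambda_homogeneous G (kernel_type a) ->
  gen_monoid (gens a [set: {perm 'I_n}]) f ->
  (exists p, f = pmap p) \/ exists2 u, S u & exists s, f = tcomp (tcomp u a) (pmap s).
Proof.
move=> homog_lam; elim=> [|f0 s0 _ IH Ss0]; first by left; exists 1; rewrite pmap1.
have [[p ->]|[u Su [s ->]]] := IH; case: Ss0 => [->|[q _ ->]].
- have [h Gh [s ->]] := perm_a_factor homog_lam p.
  by right; exists (pmap h); [exact: gen_G | exists s].
- by left; exists (p * q); rewrite pmapM.
- have [h Gh [s' Es']] := perm_a_factor homog_lam s.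
  right; exists (tcomp (tcomp u a) (pmap h)).
    exact: gen_monoid_comp (gen_monoid_comp Su gen_a) (gen_G Gh).
  by exists s'; rewrite -!tcompA Es' !tcompA.
- by right; exists u => //; exists (s * q); rewrite pmapM tcompA.
Qed.

End SnPair.

Lemma rank_lt_noninjective n (a : tmap n) : rank a < n -> ~~ injectiveb a.
Proof.
apply: contraL => /injectiveP inj_a.
by rewrite /rank card_imset // card_ord ltnn.
Qed.

Theorem lemma5p2 (n : nat) (a : {ffun 'I_n -> 'I_n}) (G : {group {perm 'I_n}}) :
  rank a < n ->
  k_homogeneous G (rank a) ->
  lambda_homogeneous G (kernel_type a) ->
  Sn_pair a G.
Proof.
move=> lt_rank homog_k homog_lam f.
have ninj_a := rank_lt_noninjective lt_rank.
split.
- case=> Gf notG; split.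
    apply: gen_monoidS Gf => s [->|[g _ ->]]; [by left | by right; exists g].
  case=> g _ Ef; have [//|] := gen_monoid_G_cases ninj_a Gf.
  rewrite Ef => /negP; apply; apply/injectiveP => u v.
  by rewrite !ffunE; exact: perm_inj.
- case=> Sf notSym; split; last by case=> g _ Ef; apply: notSym; exists g.
  have [[p Ep]|[u Su [s ->]]] := gen_monoid_Sym_cases homog_lam Sf.
    by case: notSym; exists p.
  by rewrite -tcompA; apply: gen_monoid_comp Su (gen_a_perm homog_k homog_lam s ninj_a).
Qed.
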